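(* Let $A=(a_i)_{i\ge1}$ be a weakly increasing multisubset of $\mathbb{N}$ such that $\underline{d}(A^{\#})=1$, and let $\epsilon>0$. Then for all sufficiently large integers $h$ (depending on $\epsilon$ and $A$) there exist an integer $n$ and a set $\mathscr{J}\subseteq A^{\#}\cap[a_n,(1+\epsilon)a_n]$ such that \[ h=\sum_{i=1}^{n}a_i+\sum_{x\in\mathscr{J}}x, \] where $n$ depends on $h$ and $n\to\infty$ as $h\to\infty$.
   Context: A multisubset $A$ of $\mathbb{N}$ (positive integers) is a collection of positive integers with repetitions allowed, each integer occurring only finitely often; writing $A=(a_i)$ means $a_1\le a_2\le\cdots$ lists the elements of $A$ (with multiplicity) in non-decreasing order. $A$ is weakly increasing if for each $\epsilon>0$ there is $\delta>0$ such that $a_{\lfloor(1+\epsilon)n\rfloor}/a_n>1+\delta$ for all sufficiently large $n$ (depending on $\epsilon$). $A^{\#}\subseteq\mathbb{N}$ is the set of integers appearing at least once in $A$. For $X\subseteq\mathbb{N}$, the lower asymptotic density is $\underline{d}(X)=\liminf_{n\to\infty}|X\cap[1,n]|/n$. *)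

From Stdlib Require Import Reals Lra Lia List.
From Stdlib Require Import ClassicalDescription.
From Coquelicot Require Import Coquelicot.
Open Scope R_scope.

(* A multisubset A = (a_i)_{i>=1} of positive integers, listed in
   non-decreasing order; a : nat -> nat, only indices i >= 1 are used. *)
Definition is_multisubset (a : nat -> nat) : Prop :=
  (forall i, (1 <= i)%nat -> (1 <= a i)%nat) /\
  (forall i j, (1 <= i)%nat -> (i <= j)%nat -> (a i <= a j)%nat) /\
  (forall m, exists N, forall i, (N <= i)%nat -> a i <> m).

Definition nfloor (x : R) : nat := Z.to_nat (Int_part x).

Definition weakly_increasing (a : nat -> nat) : Prop :=
  forall eps : R, 0 < eps ->
  exists delta : R, 0 < delta /\
  exists N0 : nat, forall n : nat, (N0 <= n)%nat ->
    INR (a (nfloor ((1 + eps) * INR n))) / INR (a n) > 1 + delta.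

Definition inAsharp (a : nat -> nat) (m : nat) : Prop :=
  exists i, (1 <= i)%nat /\ a i = m.

Definition count_Asharp (a : nat -> nat) (n : nat) : nat :=
  length (filter (fun m => if excluded_middle_informative (inAsharp a m)
                           then true else false) (seq 1 n)).

Definition lower_density_Asharp (a : nat -> nat) : Rbar :=
  LimInf_seq (fun n => INR (count_Asharp a n) / INR n).

Definition partial_sum (a : nat -> nat) (n : nat) : nat :=
  fold_right Nat.add 0%nat (map a (seq 1 n)).

Definition list_sum (l : list nat) : nat := fold_right Nat.add 0%nat l.

From Stdlib Require Import Reals List.
From Coquelicot Require Import Coquelicot.
From Stdlib Require Import Lia Lra Classical ClassicalDescription IndefiniteDescription.

(* Fix E with 1/E < eps.  The n-th block consists of the integers partial_sum a n + t where t is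
   a sum of 2E + 2 distinct elements of A^# in [a_n, a_n + a_n/E] (a subset of
   [a_n, (1 + eps) a_n]).  As A^# has density one, that interval misses only o(a_n) integers,
   and choosing the summands one at a time, each in a short window, realises every t in
   [(2E + 2) a_n, (2E + 2)(a_n + a_n/E)] up to a margin of o(a_n).  Density one also forces
   a_(n+1) - a_n = o(a_n), because the integers strictly between a_n and a_(n+1) all miss A^#;
   hence consecutive blocks overlap.  A large h then lies in the block of the largest n whose
   block starts below h, and this n tends to infinity with h. *)

Local Open Scope nat_scope.

Definition indicator (P : Prop) : nat := if excluded_middle_informative P then 1 else 0.

Fixpoint count_pred (P : nat -> Prop) (u n : nat) : nat :=
  match n with
  | 0 => 0
  | S n' => indicator (P u) + count_pred P (S u) n'
  end.

Lemma count_Asharp_count_pred a n : count_Asharp a n = count_pred (inAsharp a) 1 n.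
Proof.
  unfold count_Asharp; generalize 1 as u; induction n as [|n IH]; intros u; [reflexivity|].
  simpl; unfold indicator; destruct excluded_middle_informative; simpl; now rewrite IH.
Qed.

Lemma count_pred_split P u n m :
  count_pred P u (n + m) = count_pred P u n + count_pred P (u + n) m.
Proof.
  revert u; induction n as [|n IH]; intros u; simpl.
  - now rewrite Nat.add_0_r.
  - rewrite IH; replace (S u + n) with (u + S n) by lia; lia.
Qed.

Lemma count_pred_last P u n :
  count_pred P u (S n) = count_pred P u n + indicator (P (u + n)).
Proof. rewrite <- Nat.add_1_r, count_pred_split; simpl; lia. Qed.

Lemma count_pred_sub_window P u n u' n' :
  u <= u' -> u' + n' <= u + n -> count_pred P u' n' <= count_pred P u n.
Proof.
  intros H1 H2.
  replace n with ((u' - u) + (n' + (u + n - u' - n'))) by lia.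
  rewrite !count_pred_split; replace (u + (u' - u)) with u' by lia; lia.
Qed.

Lemma count_pred_impl (P Q : nat -> Prop) u n :
  (forall z, P z -> Q z) -> count_pred P u n <= count_pred Q u n.
Proof.
  intros PQ; revert u; induction n as [|n IH]; intros u; simpl; [lia|].
  specialize (IH (S u)); unfold indicator.
  destruct (excluded_middle_informative (P u)) as [p|];
    destruct (excluded_middle_informative (Q u)) as [|q]; try lia.
  exfalso; exact (q (PQ u p)).
Qed.

Lemma count_pred_or P Q u n :
  count_pred (fun z => P z \/ Q z) u n <= count_pred P u n + count_pred Q u n.
Proof.
  revert u; induction n as [|n IH]; intros u; simpl; [lia|].
  specialize (IH (S u)); unfold indicator.
  repeat destruct excluded_middle_informative; try tauto; lia.
Qed.

Lemma count_pred_compl P u n : count_pred P u n + count_pred (fun z => ~ P z) u n = n.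
Proof.
  revert u; induction n as [|n IH]; intros u; simpl; [lia|].
  specialize (IH (S u)); unfold indicator.
  repeat destruct excluded_middle_informative; try tauto; lia.
Qed.

Lemma count_pred_all (P : nat -> Prop) u n :
  (forall z, u <= z < u + n -> P z) -> count_pred P u n = n.
Proof.
  revert u; induction n as [|n IH]; intros u H; simpl; [lia|].
  rewrite IH by (intros; apply H; lia); unfold indicator.
  destruct excluded_middle_informative as [|np]; [lia|].
  exfalso; apply np, H; lia.
Qed.

Lemma count_pred_none (P : nat -> Prop) u n :
  (forall z, u <= z -> ~ P z) -> count_pred P u n = 0.
Proof.
  revert u; induction n as [|n IH]; intros u H; simpl; [lia|].
  rewrite IH by (intros; apply H; lia); unfold indicator.
  destruct excluded_middle_informative as [p|]; [exfalso; exact (H u (le_n u) p)|lia].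
Qed.

Lemma count_pred_eq_le_1 y u n : count_pred (fun z => z = y) u n <= 1.
Proof.
  revert u; induction n as [|n IH]; intros u; simpl; [lia|].
  unfold indicator at 1; destruct excluded_middle_informative as [->|].
  - rewrite count_pred_none by lia; lia.
  - specialize (IH (S u)); lia.
Qed.

Lemma count_pred_reflect (Q : nat -> Prop) t u n : u + n <= t + 1 ->
  count_pred (fun y => Q (t - y)) u n = count_pred Q (t + 1 - u - n) n.
Proof.
  revert u; induction n as [|n IH]; intros u H; [reflexivity|].
  simpl count_pred at 1; rewrite IH, count_pred_last by lia.
  replace (t + 1 - S u - n) with (t + 1 - u - S n) by lia.
  replace (t + 1 - u - S n + n) with (t - u) by lia; lia.
Qed.

Lemma count_pred_lt_exists P u n :
  count_pred P u n < n -> exists y, u <= y < u + n /\ ~ P y.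
Proof.
  revert u; induction n as [|n IH]; intros u H; simpl in H; [lia|].
  unfold indicator in H; destruct excluded_middle_informative as [p|np].
  - destruct (IH (S u)) as [y [Hy Py]]; [lia|]. exists y; split; [lia|exact Py].
  - exists u; split; [lia|exact np].
Qed.

Definition distinct_rep (B : nat -> Prop) (x L t : nat) (l : list nat) : Prop :=
  NoDup l /\ (forall z, In z l -> B z /\ x <= z <= x + L) /\ list_sum l = t.

Lemma member_in_window B x L M p :
  count_pred (fun z => ~ B z) x (S L) <= M -> x <= p -> p + M <= x + L ->
  exists y, p <= y <= p + M /\ B y.
Proof.
  intros HB Hp1 Hp2.
  assert (Hc : count_pred (fun z => ~ B z) p (S M) < S M).
  { enough (count_pred (fun z => ~ B z) p (S M) <= M) by lia.
    eapply Nat.le_trans; [apply (count_pred_sub_window _ x (S L))|]; lia. }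
  destruct (count_pred_lt_exists _ _ _ Hc) as [y [Hy HBy]].
  exists y; split; [lia|exact (NNPP _ HBy)].
Qed.

Lemma count_pred_remove B y u n M :
  count_pred (fun z => ~ B z) u n <= M ->
  count_pred (fun z => ~ (B z /\ z <> y)) u n <= S M.
Proof.
  intros HB.
  eapply Nat.le_trans; [apply (count_pred_impl _ (fun z => ~ B z \/ z = y))|].
  { intros z Hz; destruct (classic (z = y)); [now right|left; tauto]. }
  eapply Nat.le_trans; [apply count_pred_or|].
  pose proof (count_pred_eq_le_1 y u n); lia.
Qed.

Lemma distinct_rep_pair B x L M t :
  count_pred (fun z => ~ B z) x (S L) <= M -> 2 * (4 * M + 1) <= L ->
  2 * x + (4 * M + 1) <= t -> t + (4 * M + 1) <= 2 * (x + L) ->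
  exists l, distinct_rep B x L t l.
Proof.
  intros HB HL Ht1 Ht2.
  assert (Hfew : forall u, x <= u -> u + (2 * M + 1) <= x + S L ->
            count_pred (fun z => ~ B z) u (2 * M + 1) <= M).
  { intros u Hu1 Hu2; eapply Nat.le_trans; [apply (count_pred_sub_window _ x (S L))|]; lia. }
  (* A window of 2M+1 candidates y in which y and t - y both stay inside [x, x + L]. *)
  set (p := Nat.max x (t - x - L)).
  assert (Hc : count_pred (fun y => ~ B y \/ ~ B (t - y)) p (2 * M + 1) < 2 * M + 1).
  { eapply Nat.le_lt_trans; [apply (count_pred_or _ (fun y => ~ B (t - y)))|].
    rewrite (count_pred_reflect (fun z => ~ B z)) by lia.
    pose proof (Hfew p ltac:(lia) ltac:(lia)).
    pose proof (Hfew (t + 1 - p - (2 * M + 1)) ltac:(lia) ltac:(lia)); lia. }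
  destruct (count_pred_lt_exists _ _ _ Hc) as [y [Hy Hny]].
  apply not_or_and in Hny as [By Bty]; apply NNPP in By; apply NNPP in Bty.
  exists (y :: t - y :: nil); split; [|split].
  - constructor; [simpl; intros [E|[]]; lia|]. constructor; [simpl; tauto|constructor].
  - intros z [<-|[<-|[]]]; repeat split; (assumption || lia).
  - simpl; lia.
Qed.

Fixpoint sum_margin (j M : nat) : nat :=
  match j with
  | 0 => 4 * M + 1
  | S j' => sum_margin j' (S M) + M + 1
  end.

Lemma sum_margin_le j M : sum_margin j M <= (j + 4) * (M + j + 2).
Proof.
  revert M; induction j as [|j IH]; intros M; simpl; [lia|].
  specialize (IH (S M)); nia.
Qed.

Lemma distinct_rep_exists j : forall B x L M t,
  count_pred (fun z => ~ B z) x (S L) <= M -> 2 * sum_margin j M <= L ->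
  (j + 2) * x + sum_margin j M <= t -> t + sum_margin j M <= (j + 2) * (x + L) ->
  exists l, distinct_rep B x L t l.
Proof.
  induction j as [|j IH]; intros B x L M t HB HL Ht1 Ht2; simpl sum_margin in *.
  - exact (distinct_rep_pair B x L M t HB HL Ht1 Ht2).
  - set (c := sum_margin j (S M)) in *.
    set (X1 := (j + 2) * x); set (X2 := (j + 2) * (x + L)).
    assert (E1 : (S j + 2) * x = X1 + x) by (unfold X1; lia).
    assert (E2 : (S j + 2) * (x + L) = X2 + x + L) by (unfold X2; lia).
    assert (E3 : X1 + L <= X2) by (unfold X1, X2; nia).
    rewrite E1 in Ht1; rewrite E2 in Ht2.
    (* p is chosen so that t - y lies in the range handled by the recursive call. *)
    set (p := Nat.min (x + L - M) (Nat.max x (t - X1 - c - M))).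
    destruct (member_in_window B x L M p HB ltac:(lia) ltac:(lia)) as [y [Hy By]].
    destruct (IH (fun z => B z /\ z <> y) x L (S M) (t - y)) as [l [Hnd [Hin Hsum]]].
    + now apply count_pred_remove.
    + lia.
    + fold c X1; lia.
    + fold c X2; lia.
    + exists (y :: l); split; [|split].
      * constructor; [intros Hy'; apply Hin in Hy'; tauto|exact Hnd].
      * intros z [<-|Hz]; [repeat split; (assumption || lia)|].
        apply Hin in Hz; repeat split; (tauto || lia).
      * simpl; unfold list_sum in *; lia.
Qed.

Lemma eventually_along (P : nat -> Prop) (g : nat -> nat) :
  (forall X, eventually (fun n => X <= g n)) -> eventually P -> eventually (fun n => P (g n)).
Proof.
  intros Hg [N HN]; destruct (Hg N) as [n0 Hn0].
  exists n0; intros n Hn; apply HN, Hn0, Hn.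
Qed.

Section DensityOne.

Variable a : nat -> nat.
Hypothesis a_mono : forall i j, 1 <= i -> i <= j -> a i <= a j.
Hypothesis a_finite : forall m, exists N, forall i, N <= i -> a i <> m.
Hypothesis a_density : lower_density_Asharp a = Finite 1.

Lemma a_unbounded X : eventually (fun n => X <= a n).
Proof.
  induction X as [|X [n0 Hn0]]; [exists 0; intros; lia|].
  destruct (a_finite X) as [N HN]; exists (Nat.max n0 N); intros n Hn.
  specialize (Hn0 n ltac:(lia)); specialize (HN n ltac:(lia)); lia.
Qed.

Lemma missing_sparse D : 0 < D ->
  eventually (fun m => D * count_pred (fun z => ~ inAsharp a z) 1 m <= m).
Proof.
  intros HD.
  destruct (ex_LimInf_seq (fun n => INR (count_Asharp a n) / INR n)%R) as [l Hl].
  unfold lower_density_Asharp in a_density.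
  rewrite (is_LimInf_seq_unique _ _ Hl) in a_density; subst l.
  assert (HDp : (0 < INR D)%R) by (apply lt_0_INR; lia).
  destruct (Hl (mkposreal (/ INR D) (Rinv_0_lt_compat _ HDp))) as [_ [N HN]].
  exists (Nat.max N 1); intros m Hm; specialize (HN m ltac:(lia)); simpl in HN.
  assert (Hmp : (0 < INR m)%R) by (apply lt_0_INR; lia).
  set (c := count_Asharp a m) in *.
  assert (Hc : (INR m * INR D - INR m < INR c * INR D)%R).
  { apply (Rmult_lt_compat_r (INR m * INR D)) in HN; [|nra].
    replace ((1 - / INR D) * (INR m * INR D))%R with (INR m * INR D - INR m)%R in HN
      by (field; lra).
    replace (INR c / INR m * (INR m * INR D))%R with (INR c * INR D)%R in HN by (field; lra).
    exact HN. }
  assert (Hcn : m * D < c * D + m) by (apply INR_lt; rewrite plus_INR, !mult_INR; lra).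
  pose proof (count_pred_compl (inAsharp a) 1 m).
  unfold c in Hcn; rewrite count_Asharp_count_pred in Hcn; nia.
Qed.

Lemma not_Asharp_between n z : 1 <= n -> a n < z < a (S n) -> ~ inAsharp a z.
Proof.
  intros Hn Hz [i [Hi <-]].
  destruct (Nat.le_gt_cases i n) as [Hin|Hin].
  - specialize (a_mono i n Hi Hin); lia.
  - specialize (a_mono (S n) i ltac:(lia) Hin); lia.
Qed.

Lemma gap_sparse C : eventually (fun n => C * (a (S n) - a n) <= a n).
Proof.
  set (D := 4 * C + 4).
  destruct (missing_sparse D ltac:(lia)) as [N1 HN1].
  destruct (a_unbounded (N1 + D)) as [n0 Hn0].
  exists (Nat.max n0 1); intros n Hn; specialize (Hn0 n ltac:(lia)).
  destruct (Nat.le_gt_cases (a (S n)) (a n)) as [Hle|Hlt]; [nia|].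
  set (m := a (S n) - 1).
  assert (Hrun : count_pred (fun z => ~ inAsharp a z) (S (a n)) (m - a n) = m - a n).
  { apply count_pred_all; intros z Hz; apply (not_Asharp_between n); unfold m in *; lia. }
  pose proof (count_pred_sub_window (fun z => ~ inAsharp a z) 1 m (S (a n)) (m - a n)
                ltac:(lia) ltac:(unfold m; lia)) as Hsub.
  specialize (HN1 m ltac:(unfold m; lia)).
  unfold m, D in *; nia.
Qed.

Lemma missing_sparse_along C :
  eventually (fun n => C * count_pred (fun z => ~ inAsharp a z) 1 (4 * a n) <= a n).
Proof.
  apply (filter_imp
           (fun n => 4 * S C * count_pred (fun z => ~ inAsharp a z) 1 (4 * a n) <= 4 * a n));
    [intros n Hn; nia|].
  apply (eventually_along (fun m => 4 * S C * count_pred _ 1 m <= m) (fun n => 4 * a n)).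
  - intros X; apply (filter_imp (fun n => X <= a n)); [lia|apply a_unbounded].
  - apply missing_sparse; lia.
Qed.

End DensityOne.

Lemma block_overlap_arith E x x' L G G' :
  1 <= E -> x <= x' -> E * L <= x < E * L + E -> 16 * E * G <= x -> 16 * E * G' <= x ->
  4 * (2 * E + 3) * (x' - x) <= x -> 8 * E <= x ->
  2 * G <= L /\ (2 * E + 3) * x' + G' + G <= (2 * E + 2) * (x + L) + 1.
Proof.
  intros HE Hxx' [HL1 HL2] HG HG' Hd Hx.
  assert (HGL : E * (2 * G) <= E * L) by nia.
  split; [apply (Nat.mul_le_mono_pos_l _ _ E); lia|nia].
Qed.

Lemma partial_sum_S a n : partial_sum a (S n) = partial_sum a n + a (S n).
Proof.
  unfold partial_sum; rewrite seq_S, map_app, fold_right_app; simpl.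
  generalize (a (S n)); induction (map a (seq 1 n)) as [|b l IH]; intros c; simpl;
    [lia|rewrite IH; lia].
Qed.

Lemma partial_sum_ge a : (forall i, 1 <= i -> 1 <= a i) -> forall n, n <= partial_sum a n.
Proof.
  intros a_pos n; induction n as [|n IH]; [simpl; lia|].
  rewrite partial_sum_S; specialize (a_pos (S n) ltac:(lia)); lia.
Qed.

Lemma greatest_exists (P : nat -> Prop) b :
  (forall m, P m -> m <= b) -> (exists m, P m) -> exists n, P n /\ forall m, P m -> m <= n.
Proof.
  revert P; induction b as [|b IH]; intros P Hb [m0 Hm0].
  - exists 0; split; [|intros m Hm; apply Hb, Hm].
    now replace 0 with m0 by (apply Hb in Hm0; lia).
  - destruct (classic (P (S b))) as [HS|HS]; [exists (S b); split; [exact HS|exact Hb]|].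
    apply IH; [|now exists m0].
    intros m Pm; specialize (Hb m Pm).
    destruct (Nat.eq_dec m (S b)) as [->|]; [contradiction|lia].
Qed.

Lemma chain_cover (lo hi : nat -> nat) n1 :
  (forall n, n <= lo n) -> (forall n, n1 <= n -> lo (S n) <= S (hi n)) ->
  forall h, lo n1 <= h ->
  exists n, n1 <= n /\ lo n <= h <= hi n /\ forall m, n1 <= m -> lo m <= h -> m <= n.
Proof.
  intros Hlo Hchain h Hh.
  destruct (greatest_exists (fun n => n1 <= n /\ lo n <= h) h) as [n [[Hn1 Hn] Hmax]].
  - intros m [_ Hm]; specialize (Hlo m); lia.
  - now exists n1.
  - exists n; repeat split; [exact Hn1|exact Hn| |intros m Hm1 Hm2; apply Hmax; lia].
    destruct (Nat.le_gt_cases h (hi n)) as [|Hgt]; [assumption|].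
    enough (S n <= n) by lia.
    apply Hmax; specialize (Hchain n Hn1); lia.
Qed.

Section Blocks.

Variable a : nat -> nat.
Variable E : nat.
Hypothesis a_pos : forall i, 1 <= i -> 1 <= a i.
Hypothesis a_mono : forall i j, 1 <= i -> i <= j -> a i <= a j.
Hypothesis a_finite : forall m, exists N, forall i, N <= i -> a i <> m.
Hypothesis a_density : lower_density_Asharp a = Finite 1.
Hypothesis E_pos : 0 < E.

Definition block_len n := a n / E.
Definition block_missing n := count_pred (fun z => ~ inAsharp a z) (a n) (S (block_len n)).
Definition block_margin n := sum_margin (2 * E) (block_missing n).
Definition block_lo n := partial_sum a n + (2 * E + 2) * a n + block_margin n.
Definition block_hi n := partial_sum a n + (2 * E + 2) * (a n + block_len n) - block_margin n.

Lemma block_len_bounds n : E * block_len n <= a n < E * block_len n + E.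
Proof.
  unfold block_len; pose proof (Nat.div_mod (a n) E ltac:(lia)).
  pose proof (Nat.mod_upper_bound (a n) E ltac:(lia)); lia.
Qed.

Lemma block_missing_le n :
  1 <= a n -> block_missing n <= count_pred (fun z => ~ inAsharp a z) 1 (2 * a n).
Proof.
  intros Han; pose proof (block_len_bounds n).
  apply count_pred_sub_window; nia.
Qed.

Lemma block_margins_small :
  eventually (fun n => 16 * E * block_margin n <= a n /\ 16 * E * block_margin (S n) <= a n).
Proof.
  set (K := 16 * E * (2 * E + 4)).
  destruct (filter_and _ _ (filter_and _ _ (a_unbounded a a_finite (2 * K * (2 * E + 2) + 1))
              (gap_sparse a a_mono a_finite a_density 1))
              (missing_sparse_along a a_finite a_density (2 * K))) as [N HN].
  exists (Nat.max N 1); intros n Hn; destruct (HN n ltac:(lia)) as [[Hlarge Hgap] Hmiss].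
  pose proof (a_mono n (S n) ltac:(lia) ltac:(lia)).
  assert (Hwin : forall m, m = n \/ m = S n ->
            block_missing m <= count_pred (fun z => ~ inAsharp a z) 1 (4 * a n)).
  { intros m [-> | ->]; (eapply Nat.le_trans; [apply block_missing_le; lia|]);
      apply count_pred_sub_window; lia. }
  assert (Hmargin : forall m, m = n \/ m = S n -> 16 * E * block_margin m <= a n).
  { intros m Hm; specialize (Hwin m Hm).
    pose proof (sum_margin_le (2 * E) (block_missing m)).
    unfold block_margin, K in *; nia. }
  split; apply Hmargin; auto.
Qed.

Lemma blocks_overlap :
  eventually (fun n => 2 * block_margin n <= block_len n /\ block_lo (S n) <= S (block_hi n)).
Proof.
  destruct (filter_and _ _ (filter_and _ _ block_margins_small
              (gap_sparse a a_mono a_finite a_density (4 * (2 * E + 3))))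
              (a_unbounded a a_finite (8 * E))) as [N HN].
  exists (Nat.max N 1); intros n Hn; destruct (HN n ltac:(lia)) as [[[HG HG'] Hgap] Hlarge].
  destruct (block_overlap_arith E (a n) (a (S n)) (block_len n)
              (block_margin n) (block_margin (S n))) as [HGL Hover];
    try (apply a_mono || apply block_len_bounds); try lia.
  split; [exact HGL|].
  unfold block_lo, block_hi; rewrite partial_sum_S; nia.
Qed.

Lemma block_representation : exists n1, forall h, block_lo n1 <= h ->
  exists n l, (forall m, n1 <= m -> block_lo m <= h -> m <= n) /\ partial_sum a n <= h /\
    distinct_rep (inAsharp a) (a n) (block_len n) (h - partial_sum a n) l.
Proof.
  destruct blocks_overlap as [n1 Hn1]; exists n1; intros h Hh.
  assert (Hlo_ge : forall n, n <= block_lo n).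
  { intros n; pose proof (partial_sum_ge a a_pos n); unfold block_lo; lia. }
  destruct (chain_cover block_lo block_hi n1 Hlo_ge (fun n Hn => proj2 (Hn1 n Hn)) h Hh)
    as [n [Hn [[Hlo Hhi] Hmax]]].
  destruct (Hn1 n Hn) as [HGL _].
  destruct (distinct_rep_exists (2 * E) (inAsharp a) (a n) (block_len n) (block_missing n)
              (h - partial_sum a n) (le_n _) HGL) as [l Hl];
    unfold block_lo, block_hi, block_margin in *; [lia|nia|].
  exists n, l; split; [exact Hmax|split; [lia|exact Hl]].
Qed.

End Blocks.

Lemma choice_above {B : Type} (b0 : B) (P : nat -> B -> Prop) (H : nat) :
  (forall h, H <= h -> exists y, P h y) -> exists f : nat -> B, forall h, H <= h -> P h (f h).
Proof.
  intros Hex.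
  destruct (functional_choice (fun h y => H <= h -> P h y)) as [f Hf];
    [|now exists f].
  intros h; destruct (Nat.le_gt_cases H h) as [Hh|Hh].
  - destruct (Hex h Hh) as [y Hy]; now exists y.
  - exists b0; lia.
Qed.

Local Open Scope R_scope.

Lemma INR_le_add_div (E x z : nat) (eps : R) : (0 < E)%nat -> / INR E < eps ->
  (z <= x + x / E)%nat -> INR z <= (1 + eps) * INR x.
Proof.
  intros HE HEeps Hz.
  assert (Hdiv : INR E * INR (x / E) <= INR x).
  { rewrite <- mult_INR; apply le_INR, Nat.Div0.mul_div_le. }
  apply le_INR in Hz; rewrite plus_INR in Hz.
  assert (HEp : 0 < INR E) by (apply lt_0_INR; lia).
  assert (INR (x / E) <= eps * INR x).
  { apply (Rmult_le_reg_l (INR E)); [exact HEp|].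
    pose proof (pos_INR x); pose proof (Rinv_r (INR E) ltac:(lra)).
    assert (1 <= INR E * eps) by nra. nra. }
  lra.
Qed.

Theorem lemma4p2 (a : nat -> nat)
  (hA : is_multisubset a) (hwi : weakly_increasing a)
  (hd : lower_density_Asharp a = Finite 1)
  (eps : R) (heps : 0 < eps) :
  exists (H : nat) (N : nat -> nat) (J : nat -> list nat),
    (forall h : nat, (H <= h)%nat ->
       NoDup (J h) /\
       (forall x, In x (J h) ->
          inAsharp a x /\ (a (N h) <= x)%nat /\
          INR x <= (1 + eps) * INR (a (N h))) /\
       h = (partial_sum a (N h) + list_sum (J h))%nat) /\
    (forall M : nat, exists H' : nat, forall h : nat,
       (H' <= h)%nat -> (M <= N h)%nat).
Proof.
  destruct hA as [a_pos [a_mono a_finite]].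
  destruct (archimed_cor1 eps heps) as [E [HEeps HE]].
  destruct (block_representation a E a_pos a_mono a_finite hd HE) as [n1 Hrep].
  set (H := block_lo a E n1).
  destruct (choice_above (0%nat, nil) (fun h p =>
      (forall m, (n1 <= m)%nat -> (block_lo a E m <= h)%nat -> (m <= fst p)%nat) /\
      (partial_sum a (fst p) <= h)%nat /\
      distinct_rep (inAsharp a) (a (fst p)) (block_len a E (fst p))
        (h - partial_sum a (fst p)) (snd p)) H) as [f Hf].
  { intros h Hh; destruct (Hrep h Hh) as [n [l Hnl]]; now exists (n, l). }
  exists H, (fun h => fst (f h)), (fun h => snd (f h)); split.
  - intros h Hh; destruct (Hf h Hh) as [_ [Hle [Hnd [Hin Hsum]]]].
    split; [exact Hnd|split; [|lia]].
    intros x Hx; destruct (Hin x Hx) as [HAx Hxwin]; unfold block_len in Hxwin.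
    split; [exact HAx|split; [lia|]].
    apply (INR_le_add_div E); [exact HE|exact HEeps|lia].
  - intros M; exists (Nat.max H (block_lo a E (Nat.max M n1))); intros h Hh.
    destruct (Hf h ltac:(lia)) as [Hmax _].
    specialize (Hmax (Nat.max M n1) ltac:(lia) ltac:(lia)); lia.
Qed.
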